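(* Let $\xi=e^{2\pi i/3}$. For all integers $k\ge2$ and $i\in\{0,1,2,3\}$, $$[t^{2k-i}]\frac{(1-t)^{k-2}(1-\xi t)^{k-1}}{1-\xi^2t}=3^{k-2}(\xi-1)\xi^{k+i-1}\quad\text{and}\quad [t^{2k-i}]\frac{(1-t)^{k-2}(1-\xi^2 t)^{k-1}}{1-\xi t}=3^{k-2}(1-\xi)\xi^{2k-i}.$$
   Context: $[t^m]F(t)$ denotes the coefficient of $t^m$ in the formal power series $F(t)$. *)

From mathcomp Require Import all_boot all_order all_algebra all_field.
Set Implicit Arguments. Unset Strict Implicit. Unset Printing Implicit Defensive.
Import Order.TTheory GRing.Theory Num.Theory.
Local Open Scope ring_scope.

(* xi = e^{2 pi i/3} = -1/2 + i sqrt(3)/2 *)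
Definition xi : algC := (-1 + 'i * sqrtC 3) / 2.

(* [t^m] ( p(t) / (1 - a t) ) for a polynomial p: since
   1/(1 - a t) = \sum_n a^n t^n, only the terms n <= m contribute to t^m. *)
Definition coef_div_lin (p : {poly algC}) (a : algC) (m : nat) : algC :=
  (p * \sum_(n < m.+1) (a *: 'X) ^+ n)`_m.

(** Dividing by [1 - a t] multiplies by the geometric series [\sum_n a^n t^n], so
    for a polynomial [p] of degree at most [m] the coefficient of [t^m] in
    [p(t) / (1 - a t)] is [a^m p(1/a)].  With [a = xi^2] (resp. [a = xi]) the
    point [1/a] is [xi] (resp. [xi^2]), where the factor [(1 - xi t)] (resp.
    [(1 - xi^2 t)]) becomes [1 - xi^2] (resp. [1 - xi]) and [(1 - xi)(1 - xi^2) = 3]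
    collapses the product to a power of 3; the powers of [xi] are then
    reduced modulo 3. *)

From mathcomp Require Import all_boot all_order all_algebra all_field.
From mathcomp Require Import ring zify.
Import Order.TTheory GRing.Theory Num.Theory.
Local Open Scope ring_scope.

Lemma coef_div_lin_horner (p : {poly algC}) (a b : algC) (m : nat) :
  a * b = 1 -> (size p <= m.+1)%N -> coef_div_lin p a m = a ^+ m * p.[b].
Proof.
move=> ab_1 size_p.
rewrite /coef_div_lin mulr_sumr coef_sum (horner_coef_wide b size_p) mulr_sumr.
rewrite (reindex_inj rev_ord_inj) /=; apply: eq_bigr => j _.
have le_jm : (j <= m)%N by rewrite -ltnS.
rewrite exprZn -scalerAr coefZ coefMXn /= subSS ltnNge leq_subr /= subKn //.
have -> : a ^+ m = a ^+ (m - j) * a ^+ j by rewrite -exprD subnK.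
rewrite -mulrA; congr (_ * _).
by rewrite mulrCA -exprMn ab_1 expr1n mulr1.
Qed.

Lemma size_lin_exp_leq {R : nzRingType} (c : R) (e : nat) :
  (size ((1 - c *: 'X) ^+ e)%R <= e.+1)%N.
Proof.
have size_lin : (size (1 - c *: 'X)%R <= 2)%N.
  rewrite (leq_trans (size_polyD _ _)) // size_poly1 size_polyN geq_max /=.
  by rewrite (leq_trans (size_scale_leq _ _)) // size_polyX.
rewrite (leq_trans (size_poly_exp_leq _ _)) //.
by move: size_lin; case: (size _) => [|[|[|s]]] //= _; rewrite ?mul0n ?mul1n.
Qed.

Lemma size_lin_exp_mul_leq {R : nzRingType} (c d : R) (n l : nat) :
  (size ((1 - c *: 'X) ^+ n * (1 - d *: 'X) ^+ l)%R <= (n + l).+1)%N.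
Proof.
rewrite (leq_trans (size_polyMleq _ _)) //.
have := size_lin_exp_leq c n; have := size_lin_exp_leq d l.
by set s1 := size _; set s2 := size _; lia.
Qed.

Lemma horner_lin_exp_mulS {R : comNzRingType} (c x : R) (n : nat) :
  ((1 - 'X) ^+ n * (1 - c *: 'X) ^+ n.+1).[x]
    = ((1 - x) * (1 - c * x)) ^+ n * (1 - c * x).
Proof. by rewrite !hornerE exprSr exprMn mulrA. Qed.

Lemma xi_cyclotomic : 1 + xi + xi ^+ 2 = 0.
Proof.
have sqrt3 : sqrtC 3 ^+ 2 = 3 :> algC by rewrite sqrtCK.
have -> : 1 + xi + xi ^+ 2 = (('i * sqrtC 3) ^+ 2 + 3) / 4 by rewrite /xi; field.
by rewrite exprMn sqrt3 sqrCi mulN1r addNr mul0r.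
Qed.

Lemma xi_cube : xi ^+ 3 = 1.
Proof.
apply/eqP; rewrite -subr_eq0.
have -> : xi ^+ 3 - 1 = (xi - 1) * (1 + xi + xi ^+ 2) by ring.
by rewrite xi_cyclotomic mulr0.
Qed.

Lemma xi_expE (a b : nat) : (a = b %[mod 3])%N -> xi ^+ a = xi ^+ b.
Proof.
move=> eq_ab; rewrite (divn_eq a 3) (divn_eq b 3) eq_ab !exprD.
by rewrite !(mulnC _ 3) !exprM xi_cube !expr1n !mul1r.
Qed.

Lemma mul_1subr_xi_xi2 : (1 - xi) * (1 - xi ^+ 2) = 3%:R.
Proof.
have -> : (1 - xi) * (1 - xi ^+ 2) = 3%:R - (1 + xi + xi ^+ 2) + (xi ^+ 3 - 1).
  by ring.
by rewrite xi_cyclotomic xi_cube subrr subr0 addr0.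
Qed.

Theorem lemma8 (k i : nat) (hk : (2 <= k)%N) (hi : (i <= 3)%N) :
  coef_div_lin ((1 - 'X) ^+ (k - 2) * (1 - xi *: 'X) ^+ (k - 1)) (xi ^+ 2)
      (2 * k - i)%N
    = 3%:R ^+ (k - 2) * (xi - 1) * xi ^+ (k + i - 1)
  /\
  coef_div_lin ((1 - 'X) ^+ (k - 2) * (1 - xi ^+ 2 *: 'X) ^+ (k - 1)) xi
      (2 * k - i)%N
    = 3%:R ^+ (k - 2) * (1 - xi) * xi ^+ (2 * k - i).
Proof.
case: k hk => [|[|n]] // _.
rewrite !subSS subn0.
set m := (2 * n.+2 - i)%N.
have size_p (c : algC) :
    (size ((1 - 'X) ^+ n * (1 - c *: 'X) ^+ n.+1)%R <= m.+1)%N.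
  have := size_lin_exp_mul_leq 1 c n n.+1; rewrite scale1r /m.
  by set s := size _; lia.
split.
- rewrite (@coef_div_lin_horner _ _ xi _ _ (size_p _)); last first.
    by rewrite -exprSr xi_cube.
  rewrite (horner_lin_exp_mulS (R := algC)) -expr2 mul_1subr_xi_xi2 -exprM.
  rewrite (@xi_expE _ (n.+2 + i - 1).+1); last by rewrite /m; lia.
  have -> : xi - 1 = (1 - xi ^+ 2) * xi by rewrite mulrBl mul1r -exprSr xi_cube.
  rewrite exprS; ring.
- rewrite (@coef_div_lin_horner _ _ (xi ^+ 2) _ _ (size_p _)); last first.
    by rewrite -exprS xi_cube.
  rewrite (horner_lin_exp_mulS (R := algC)) -exprD (@xi_expE 4 1) //.
  by rewrite [(1 - xi ^+ 2) * _]mulrC mul_1subr_xi_xi2; ring.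
Qed.
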